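(* Let $W_{Y|\mathbf{X}}:\mathcal{X}_1\times\dots\times\mathcal{X}_K\to\mathcal{P}(\mathcal{Y})$ be a discrete memoryless $K$-input multiple-access channel with finite alphabets, cost functions $\phi_k:\mathcal{X}_k\to\mathbb{R}_+$ and cost constraints $\boldsymbol\Phi\in\mathbb{R}_+^K$. If the DI capacity region $\mathsf{C}_{\mathsf{DI}}(W_{Y|\mathbf{X}},\boldsymbol\phi,\boldsymbol\Phi)$ contains a rate tuple $\mathbf{R}$ with $R_k>0$ for all $k\in[K]$, then every sequence $(\mathbf{M}_n)_{n\in\mathbb{N}}$ of code size tuples $\mathbf{M}_n\in\mathbb{N}^K$ is achievable for average-error deterministic identification (DIA) under the constraint $\frac1n\sum_{i=1}^n\boldsymbol\phi(\mathbf{x}_i)\preceq\boldsymbol\Phi$.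
   Context: Notation: $[K]=\{1,\dots,K\}$, $\preceq$ is componentwise $\le$, $\boldsymbol\phi(\mathbf{x})=(\phi_1(x_1),\dots,\phi_K(x_K))$, $W^n_{Y|\mathbf{X}}(y^n|\mathbf{x}^n)=\prod_iW_{Y|\mathbf{X}}(y_i|\mathbf{x}_i)$. An $(\mathbf{M},n)$ DI code is a pair $(\mathbf{f},g)$ with encoders $f_k:[M_k]\to\mathcal{X}_k^n$ and $g:[M_1]\times\dots\times[M_K]\times\mathcal{Y}^n\to\{0,1\}^K$ (components $g_k$); message tuple $\mathbf{m}$ is sent as $\mathbf{f}(\mathbf{m})=(f_1(m_1),\dots,f_K(m_K))$ and $Y^n\sim W^n_{Y|\mathbf{X}}(\cdot|\mathbf{f}(\mathbf{m}))$. Errors: $e_k(\mathbf{m}'|\mathbf{m})=\Pr[g_k(\mathbf{m}',Y^n)\ne\mathbf{1}\{m'_k=m_k\}]$ and $e(\mathbf{m}'|\mathbf{m})=\Pr[\exists k: g_k(\mathbf{m}',Y^n)\ne\mathbf{1}\{m'_k=m_k\}]$. Achievability under the maximal-error criterion: an $(\mathbf{M},n,\boldsymbol\phi,\boldsymbol\Phi,\lambda)$ DI code is an $(\mathbf{M},n)$ DI code whose codeword tuples all satisfy $\frac1n\sum_i\boldsymbol\phi(\mathbf{x}_i)\preceq\boldsymbol\Phi$ and with $e(\mathbf{m}'|\mathbf{m})\le\lambda$ for all $\mathbf{m},\mathbf{m}'$; a rate tuple $\mathbf{R}\in\mathbb{R}_+^K$ is achievable if for every $\lambda>0$ and all large $n$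 such a code exists with $\frac1n\log_2M_k\ge R_k$; $\mathsf{C}_{\mathsf{DI}}$ is the closure of the set of achievable rate tuples. Average-error criterion: for a receiver's tuple $\mathbf{m}'$ and sender $k$, $\bar e_k(\mathbf{m}')$ is the average of $e_k(\mathbf{m}'|\mathbf{m})$ over messages $\mathbf{m}$ with $m_k$ uniform on $[M_k]\setminus\{m'_k\}$ and $m_j$ uniform on $[M_j]$ for $j\ne k$, and $\bar e(\mathbf{m}')=\sum_k\bar e_k(\mathbf{m}')$. An $(\mathbf{M},n,\boldsymbol\phi,\boldsymbol\Phi,\lambda)$ DIA code is an $(\mathbf{M},n)$ DI code satisfying the cost constraint for all codeword tuples, with $e(\mathbf{m}|\mathbf{m})\le\lambda$ for all $\mathbf{m}$ and $\bar e(\mathbf{m}')\le\lambda$ for all $\mathbf{m}'$. A sequence $(\mathbf{M}_n)_{n}$ is achievable if for every $\lambda>0$ and all sufficiently large $n$ there exists an $(\mathbf{M}_n,n,\boldsymbol\phi,\boldsymbol\Phi,\lambda)$ DIA code. *)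

From HB Require Import structures.
From mathcomp Require Import all_boot all_order all_algebra.
From mathcomp Require Import reals exp.
Set Implicit Arguments. Unset Strict Implicit. Unset Printing Implicit Defensive.
Import Order.TTheory GRing.Theory Num.Theory.
Local Open Scope ring_scope.

Section DI.
Variables (R : realType) (K : nat) (X : 'I_K -> finType) (Y : finType).

Definition input := {dffun forall k : 'I_K, X k}.

Definition is_channel (W : input -> Y -> R) : Prop :=
  (forall x y, 0 <= W x y) /\ (forall x, \sum_(y : Y) W x y = 1).

Definition Wn (W : input -> Y -> R) (n : nat)
  (xs : 'I_n -> input) (ys : {ffun 'I_n -> Y}) : R :=
  \prod_(i < n) W (xs i) (ys i).

Definition msgs (M : 'I_K -> nat) := {dffun forall k : 'I_K, 'I_(M k)}.

Definition encoder (M : 'I_K -> nat) (n : nat) :=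
  forall k : 'I_K, 'I_(M k) -> 'I_n -> X k.

Definition decoder (M : 'I_K -> nat) (n : nat) :=
  msgs M -> {ffun 'I_n -> Y} -> 'I_K -> bool.

Definition cw (M : 'I_K -> nat) (n : nat) (f : encoder M n) (m : msgs M)
  (i : 'I_n) : input := [ffun k => f k (m k) i].

Definition err_k (W : input -> Y -> R) (M : 'I_K -> nat) (n : nat)
  (f : encoder M n) (g : decoder M n) (m' m : msgs M) (k : 'I_K) : R :=
  \sum_(ys : {ffun 'I_n -> Y})
     Wn W (cw f m) ys * (g m' ys k != (m' k == m k))%:R.

Definition err (W : input -> Y -> R) (M : 'I_K -> nat) (n : nat)
  (f : encoder M n) (g : decoder M n) (m' m : msgs M) : R :=
  \sum_(ys : {ffun 'I_n -> Y})
     Wn W (cw f m) ys * [exists k, g m' ys k != (m' k == m k)]%:R.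

Definition cost_ok (phi : forall k : 'I_K, X k -> R) (Phi : 'I_K -> R)
  (M : 'I_K -> nat) (n : nat) (f : encoder M n) : Prop :=
  forall (m : msgs M) (k : 'I_K),
    (n%:R)^-1 * \sum_(i < n) phi k (f k (m k) i) <= Phi k.

Definition DI_code (W : input -> Y -> R) (phi : forall k : 'I_K, X k -> R)
  (Phi : 'I_K -> R) (M : 'I_K -> nat) (n : nat) (lambda : R)
  (f : encoder M n) (g : decoder M n) : Prop :=
  cost_ok phi Phi f /\ (forall m m' : msgs M, err W f g m' m <= lambda).

Definition achievable_rate (W : input -> Y -> R)
  (phi : forall k : 'I_K, X k -> R) (Phi : 'I_K -> R) (Rt : 'I_K -> R) : Prop :=
  (forall k, 0 <= Rt k) /\
  forall lambda : R, 0 < lambda ->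
    exists N : nat, forall n : nat, (N <= n)%N ->
      exists (M : 'I_K -> nat) (f : encoder M n) (g : decoder M n),
        (forall k, (0 < M k)%N) /\
        DI_code W phi Phi lambda f g /\
        (forall k, (n%:R)^-1 * (ln (M k)%:R / ln 2) >= Rt k).

(* C_DI: closure in R^K of the set of achievable rate tuples *)
Definition in_C_DI (W : input -> Y -> R) (phi : forall k : 'I_K, X k -> R)
  (Phi : 'I_K -> R) (Rt : 'I_K -> R) : Prop :=
  forall eps : R, 0 < eps ->
    exists Rt' : 'I_K -> R, achievable_rate W phi Phi Rt' /\
      forall k, `|Rt k - Rt' k| < eps.

(* bar e_k(m'): average of e_k(m'|m) over m with m_k uniform on
   [M_k] \ {m'_k} and m_j uniform on [M_j] (j <> k), i.e. m uniform on
   {m | m_k <> m'_k}.  (If that set is empty, i.e. M_k = 1, the value is 0.) *)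
Definition avg_err_k (W : input -> Y -> R) (M : 'I_K -> nat) (n : nat)
  (f : encoder M n) (g : decoder M n) (m' : msgs M) (k : 'I_K) : R :=
  (#|[pred m : msgs M | m k != m' k]|%:R)^-1 *
  \sum_(m : msgs M | m k != m' k) err_k W f g m' m k.

Definition avg_err (W : input -> Y -> R) (M : 'I_K -> nat) (n : nat)
  (f : encoder M n) (g : decoder M n) (m' : msgs M) : R :=
  \sum_(k < K) avg_err_k W f g m' k.

Definition DIA_code (W : input -> Y -> R) (phi : forall k : 'I_K, X k -> R)
  (Phi : 'I_K -> R) (M : 'I_K -> nat) (n : nat) (lambda : R)
  (f : encoder M n) (g : decoder M n) : Prop :=
  [/\ cost_ok phi Phi f,
      (forall m : msgs M, err W f g m m <= lambda) &
      (forall m' : msgs M, avg_err W f g m' <= lambda)].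

Definition DIA_achievable (W : input -> Y -> R)
  (phi : forall k : 'I_K, X k -> R) (Phi : 'I_K -> R)
  (Ms : nat -> 'I_K -> nat) : Prop :=
  forall lambda : R, 0 < lambda ->
    exists N : nat, forall n : nat, (N <= n)%N ->
      exists (f : encoder (Ms n) n) (g : decoder (Ms n) n),
        DIA_code W phi Phi lambda f g.

End DI.

(* A deterministic identification code of positive rate has, for large n,
   code sizes M0_k beyond any bound, in particular with 1/M0_k <= lambda.
   Any size tuple M_n is then reached by hashing each message m_k to
   m_k mod M0_k and using the maximal-error code on the hashes.  The
   diagonal error e(m|m) is unchanged, and e_k(m'|m) is at most lambda
   unless m_k and m'_k collide; among the m_k != m'_k at most a fraction
   1/M0_k collide, so each average error bar e_k(m') is at most 2 lambda. *)

From HB Require Import structures.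
From mathcomp Require Import all_boot all_order all_algebra.
From mathcomp Require Import reals exp.
From mathcomp Require Import ring lra zify.
Set Implicit Arguments. Unset Strict Implicit. Unset Printing Implicit Defensive.
Import Order.TTheory GRing.Theory Num.Theory.

Section CoordinateFibers.
Variables (I : finType) (T : I -> finType) (i : I).
Implicit Types (x y : T i) (P : pred (T i)).

Definition set_coord (t : {dffun forall j, T j}) x : {dffun forall j, T j} :=
  [ffun j => dfwith (fun j => t j) x j].

Lemma set_coord_at t x : set_coord t x i = x.
Proof. by rewrite ffunE dfwith_in. Qed.

Lemma card_fiber_le x y :
  #|[pred t : {dffun forall j, T j} | t i == x]| <=
  #|[pred t : {dffun forall j, T j} | t i == y]|.
Proof.
rewrite -(card_in_image (f := set_coord ^~ y)); last first.
  move=> t1 t2; rewrite !inE => /eqP t1x /eqP t2x eq12; apply/ffunP => j.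
  have := congr1 (fun t : {dffun forall j, T j} => t j) eq12; rewrite !ffunE.
  case: (eqVneq i j) => [<-|nij]; first by rewrite t1x t2x.
  by rewrite !dfwith_out.
apply/subset_leq_card/subsetP => _ /imageP[t _ ->].
by rewrite inE set_coord_at.
Qed.

Lemma card_fiber_eq x y :
  #|[pred t : {dffun forall j, T j} | t i == x]| =
  #|[pred t : {dffun forall j, T j} | t i == y]|.
Proof. by apply/eqP; rewrite eqn_leq !card_fiber_le. Qed.

Lemma card_preim_coord P x :
  #|[pred t : {dffun forall j, T j} | P (t i)]| =
  #|P| * #|[pred t : {dffun forall j, T j} | t i == x]|.
Proof.
rewrite -[LHS]sum1_card.
rewrite (partition_big (fun t : {dffun forall j, T j} => t i) P) //=.
rewrite -sum_nat_const.
apply: eq_bigr => y Py; rewrite (card_fiber_eq x y) -sum1_card.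
by apply: eq_bigl => t; rewrite !inE; case: eqP => [->|]; rewrite ?Py ?andbF.
Qed.

End CoordinateFibers.

Lemma card_eqmod_le (M d : nat) (i : 'I_M) : 0 < d ->
  #|[pred j : 'I_M | j %% d == i %% d]| <= (M.-1 %/ d).+1.
Proof.
move=> d_gt0; rewrite cardE -(size_map (fun j : 'I_M => j %/ d)).
rewrite -(size_iota 0 (M.-1 %/ d).+1).
apply: uniq_leq_size => [|_ /mapP[j _ ->]].
  rewrite map_inj_in_uniq ?enum_uniq // => j1 j2.
  rewrite !mem_enum !inE => /eqP e1 /eqP e2 eq_div; apply: val_inj.
  by rewrite /= (divn_eq j1 d) (divn_eq j2 d) eq_div e1 e2.
rewrite mem_iota add0n ltnS leq_div2r //; have := ltn_ord j; lia.
Qed.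

Lemma card_eqmod_neq_mul_le (M d : nat) (i : 'I_M) : 0 < d ->
  #|[pred j : 'I_M | (j != i) && (j %% d == i %% d)]| * d <= M.-1.
Proof.
move=> d_gt0; apply: leq_trans (leq_divM M.-1 d); rewrite leq_mul2r.
apply/orP; right; rewrite -ltnS; apply: leq_trans (card_eqmod_le i d_gt0).
by rewrite [X in _ < X](cardD1 i) inE eqxx.
Qed.

Local Open Scope ring_scope.

Lemma mean_le_of_sparse (R : realFieldType) (T : finType) (A B : pred T)
    (a : T -> R) (lam : R) (d : nat) :
  0 <= lam -> (0 < d)%N -> (#|predI A B| * d <= #|A|)%N ->
  (forall t, A t -> a t <= lam + (B t)%:R) ->
  #|A|%:R^-1 * \sum_(t | A t) a t <= lam + d%:R^-1.
Proof.
move=> lam_ge0 d_gt0 sparse a_le; have [->|A_gt0] := posnP #|A|.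
  by rewrite invr0 mul0r addr_ge0 ?invr_ge0.
have sum_le : \sum_(t | A t) a t <= lam * #|A|%:R + #|predI A B|%:R.
  apply: le_trans (ler_sum _ a_le) _; rewrite big_split /= sumr_const mulr_natr.
  rewrite lerD2l -sum1_card natr_sum big_mkcondr /=.
  by apply: ler_sum => t _; case: (B t).
have A_pos : 0 < #|A|%:R :> R by rewrite ltr0n.
rewrite ler_pdivrMl // mulrDr mulrC.
apply: le_trans sum_le _; rewrite lerD2l ler_pdivlMr ?ltr0n //.
by rewrite -natrM ler_nat.
Qed.

Section Channel.
Variables (R : realType) (K : nat) (X : 'I_K -> finType) (Y : finType)
  (W : input X -> Y -> R).
Hypothesis W_channel : is_channel W.

Lemma Wn_ge0 n (xs : 'I_n -> input X) ys : 0 <= Wn W xs ys.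
Proof. by apply: prodr_ge0 => i _; case: W_channel. Qed.

Lemma sum_Wn n (xs : 'I_n -> input X) : \sum_ys Wn W xs ys = 1.
Proof.
rewrite /Wn -(bigA_distr_bigA (fun i y => W (xs i) y)) /=.
by rewrite big1 // => i _; case: W_channel => _ ->.
Qed.

Variables (M : 'I_K -> nat) (n : nat) (f : encoder X M n) (g : decoder Y M n).

Lemma err_k_le1 m' m k : err_k W f g m' m k <= 1.
Proof.
rewrite /err_k -[X in _ <= X](sum_Wn (cw f m)); apply: ler_sum => ys _.
by rewrite ler_piMr ?Wn_ge0 // lern1 leq_b1.
Qed.

Lemma err_k_le_err m' m k : err_k W f g m' m k <= err W f g m' m.
Proof.
apply: ler_sum => ys _; rewrite ler_wpM2l ?Wn_ge0 // ler_nat.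
case: (boolP (g m' ys k != _)) => // nk.
by rewrite lt0b; apply/existsP; exists k.
Qed.

End Channel.

Section Hashing.
Variables (R : realType) (K : nat) (X : 'I_K -> finType) (Y : finType)
  (W : input X -> Y -> R).
Hypothesis W_channel : is_channel W.
Variables (M M0 : 'I_K -> nat) (n : nat).
Hypothesis M0_gt0 : forall k, (0 < M0 k)%N.

Definition hash_idx k (i : 'I_(M k)) : 'I_(M0 k) :=
  Ordinal (ltn_pmod i (M0_gt0 k)).

Definition hash_msg (m : msgs M) : msgs M0 :=
  @finfun _ (fun k => 'I_(M0 k)) (fun k => hash_idx (m k)).

Definition hash_enc (f : encoder X M0 n) : encoder X M n :=
  fun k i => f k (hash_idx i).

Definition hash_dec (g : decoder Y M0 n) : decoder Y M n :=
  fun m' => g (hash_msg m').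

Variables (f : encoder X M0 n) (g : decoder Y M0 n).

Lemma Wn_hash_enc m ys :
  Wn W (cw (hash_enc f) m) ys = Wn W (cw f (hash_msg m)) ys.
Proof. by apply: eq_bigr => i _; congr W; apply/ffunP => k; rewrite !ffunE. Qed.

Lemma err_hash_diag m :
  err W (hash_enc f) (hash_dec g) m m = err W f g (hash_msg m) (hash_msg m).
Proof.
apply: eq_bigr => ys _; rewrite Wn_hash_enc; congr (_ * (nat_of_bool _)%:R).
by apply: eq_existsb => k; rewrite !eqxx.
Qed.

Lemma err_k_hash (m' m : msgs M) k : hash_idx (m k) != hash_idx (m' k) ->
  err_k W (hash_enc f) (hash_dec g) m' m k =
  err_k W f g (hash_msg m') (hash_msg m) k.
Proof.
move=> no_collision; apply: eq_bigr => ys _; rewrite Wn_hash_enc.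
congr (_ * (nat_of_bool _)%:R); rewrite /hash_dec !ffunE.
rewrite [hash_idx _ == _]eq_sym (negbTE no_collision).
have ne_k : m' k != m k by apply: contraNneq no_collision => ->.
by rewrite (negbTE ne_k).
Qed.

Lemma card_hash_collision_mul_le (m' : msgs M) k :
  (#|[pred m : msgs M | (m k != m' k) && (hash_idx (m k) == hash_idx (m' k))]|
     * M0 k <= #|[pred m : msgs M | m k != m' k]|)%N.
Proof.
pose collide :=
  [pred j : 'I_(M k) | (j != m' k) && (j %% M0 k == m' k %% M0 k)%N].
rewrite (eq_card (B := [pred m : msgs M | collide (m k)])) => [|m]; last first.
  by rewrite !inE -val_eqE.
rewrite (card_preim_coord collide (m' k)).
rewrite (card_preim_coord [pred j | j != m' k] (m' k)) cardC1 card_ord.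
by rewrite mulnAC leq_mul2r card_eqmod_neq_mul_le ?orbT.
Qed.

Lemma avg_err_k_hash_le (lam0 : R) m' k : 0 <= lam0 ->
  (forall m m', err W f g m' m <= lam0) ->
  avg_err_k W (hash_enc f) (hash_dec g) m' k <= lam0 + (M0 k)%:R^-1.
Proof.
move=> lam0_ge0 err_le; apply: (mean_le_of_sparse lam0_ge0 (M0_gt0 k)) => /=.
  exact: card_hash_collision_mul_le.
move=> m _ /=.
have [_|no_collision] := eqVneq (hash_idx (m k)) (hash_idx (m' k)).
  exact: le_trans (err_k_le1 W_channel _ _ m' m k) (ler_wpDl lam0_ge0 (lexx _)).
rewrite err_k_hash // addr0.
exact: le_trans (err_k_le_err W_channel f g _ _ k) (err_le _ _).
Qed.

Lemma DIA_code_hash (phi : forall k, X k -> R) (Phi : 'I_K -> R) (lam0 : R) :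
  0 <= lam0 -> (forall k, (M0 k)%:R^-1 <= lam0) -> DI_code W phi Phi lam0 f g ->
  DIA_code W phi Phi (lam0 *+ (2 * K).+1) (hash_enc f) (hash_dec g).
Proof.
move=> lam0_ge0 M0_large [cost_f err_le].
have lam0_le : lam0 *+ (2 * K) <= lam0 *+ (2 * K).+1.
  by rewrite mulrS lerDr.
split.
- by move=> m k; have := cost_f (hash_msg m) k; rewrite ffunE.
- move=> m; rewrite err_hash_diag; apply: le_trans (err_le _ _) _.
  by rewrite mulrS lerDl mulrn_wge0.
- move=> m'; apply: le_trans lam0_le.
  rewrite mulrnA -[in X in _ <= X](card_ord K) -sumr_const.
  apply: ler_sum => k _.
  apply: le_trans (avg_err_k_hash_le _ _ lam0_ge0 err_le) _.
  by rewrite mulr2n lerD2l.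
Qed.

End Hashing.

Lemma invr_le_of_truncn_lt (R : archiRealFieldType) (x : R) (M : nat) :
  0 < x -> (Num.truncn x^-1 < M)%N -> M%:R^-1 <= x.
Proof.
move=> x_gt0 trunc_lt; have M_gt0 : 0 < M%:R :> R.
  by rewrite ltr0n; apply: leq_ltn_trans trunc_lt.
rewrite -[x in _ <= x]invrK lef_pV2 ?posrE ?invr_gt0 //.
by apply/ltW/(lt_le_trans (truncnS_gt _)); rewrite ler_nat.
Qed.

Lemma size_gt_of_rate (R : realType) (r : R) (n M T : nat) :
  0 < r -> ln T%:R < r * ln 2 * n%:R -> r <= n%:R^-1 * (ln M%:R / ln 2) ->
  (0 < M)%N -> (T < M)%N.
Proof.
move=> r_gt0 T_small rate M_gt0; rewrite ltnNge; apply/negP => M_le_T.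
have ln2_gt0 : 0 < ln (2 : R) by apply: ln_gt0; lra.
have n_gt0 : 0 < n%:R :> R.
  rewrite ltr0n lt0n; apply: contraTneq rate => ->.
  by rewrite invr0 mul0r -ltNge.
have lnM_le : ln M%:R <= ln T%:R :> R.
  by rewrite ler_ln ?posrE ?ltr0n ?ler_nat //; apply: leq_trans M_le_T.
move: rate; rewrite mulrC ler_pdivlMr // ler_pdivlMr //.
have : r * ln 2 * n%:R = r * n%:R * ln (2 : R) by ring.
lra.
Qed.

Section Rates.
Variables (R : realType) (K : nat) (X : 'I_K -> finType) (Y : finType)
  (W : input X -> Y -> R) (phi : forall k, X k -> R) (Phi : 'I_K -> R).

Lemma achievable_pos_of_in_C_DI (Rt : 'I_K -> R) :
  in_C_DI W phi Phi Rt -> (forall k, 0 < Rt k) ->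
  exists Rt', achievable_rate W phi Phi Rt' /\ forall k, 0 < Rt' k.
Proof.
move=> Rt_in Rt_gt0; pose eps := \big[Order.min/1]_k Rt k.
have eps_gt0 : 0 < eps by apply: lt_bigmin.
have [Rt' [Rt'_ach Rt'_close]] := Rt_in eps eps_gt0.
exists Rt'; split => // k.
have : eps <= Rt k by apply: bigmin_le.
have := Rt'_close k; have := ler_norm (Rt k - Rt' k); lra.
Qed.

Lemma large_DI_codes (Rt : 'I_K -> R) (lam0 : R) (T : nat) :
  achievable_rate W phi Phi Rt -> (forall k, 0 < Rt k) -> 0 < lam0 ->
  exists N, forall n, (N <= n)%N ->
    exists M (f : encoder X M n) (g : decoder Y M n),
      (forall k, T < M k)%N /\ DI_code W phi Phi lam0 f g.
Proof.
move=> [_ Rt_ach] Rt_gt0 lam0_gt0; have [N codes] := Rt_ach lam0 lam0_gt0.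
have ln2_gt0 : 0 < ln (2 : R) by apply: ln_gt0; lra.
pose N_rate k := (Num.truncn (ln T%:R / (Rt k * ln 2))).+1.
exists (maxn N (\max_k N_rate k)) => n.
rewrite geq_max => /andP[N_le N_rate_le].
have [M [f [g [M_gt0 [code rate]]]]] := codes n N_le.
exists M, f, g; split => // k.
apply: size_gt_of_rate (Rt_gt0 k) _ (rate k) (M_gt0 k).
rewrite -ltr_pdivrMl ?mulr_gt0 // mulrC; apply: lt_le_trans (truncnS_gt _) _.
by rewrite ler_nat; apply: leq_trans (leq_bigmax k) N_rate_le.
Qed.

End Rates.

Theorem theorem3 (R : realType) (K : nat) (X : 'I_K -> finType) (Y : finType)
  (W : input X -> Y -> R) (phi : forall k : 'I_K, X k -> R) (Phi : 'I_K -> R) :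
  is_channel W ->
  (forall k (x : X k), 0 <= phi k x) ->
  (forall k, 0 <= Phi k) ->
  (exists Rt : 'I_K -> R, in_C_DI W phi Phi Rt /\ (forall k, 0 < Rt k)) ->
  forall Ms : nat -> 'I_K -> nat, DIA_achievable W phi Phi Ms.
Proof.
move=> W_channel _ _ [Rt [Rt_in Rt_gt0]] Ms lam lam_gt0.
have [Rt' [Rt'_ach Rt'_gt0]] := achievable_pos_of_in_C_DI Rt_in Rt_gt0.
pose lam0 := lam / ((2 * K).+1)%:R.
have lam0_gt0 : 0 < lam0 by rewrite divr_gt0 ?ltr0n.
have [N codes] := large_DI_codes (Num.truncn lam0^-1) Rt'_ach Rt'_gt0 lam0_gt0.
exists N => n /codes[M0 [f [g [M0_large code]]]].
have M0_gt0 k : (0 < M0 k)%N by apply: leq_ltn_trans (M0_large k).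
exists (hash_enc M0_gt0 f), (hash_dec M0_gt0 g).
have -> : lam = lam0 *+ (2 * K).+1 by rewrite -mulr_natr divfK ?pnatr_eq0.
apply: (DIA_code_hash W_channel _ M0_gt0 (ltW lam0_gt0) _ code) => k.
exact: invr_le_of_truncn_lt lam0_gt0 (M0_large k).
Qed.
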